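(* There is an absolute constant $c>0$ such that for all $n,k\ge1$ and every $k$-monotone sequence $S\in[n]^n$ (a sequence of length $n$ over keys $[n]$), ${\mathit LF}^k(S)\le c\,nk$.
   Context: A sequence $X=(x_1,\dots,x_m)$ contains a permutation pattern $\pi$ of length $k$ if there are indices $i_1<\dots<i_k$ with $x_{i_a}<x_{i_b}$ iff $\pi(a)<\pi(b)$; otherwise it avoids $\pi$. $X$ is $k$-monotone if it avoids $(1,2,\dots,k)$ or avoids $(k,k-1,\dots,1)$. For a BST $T$, $d_T(a,b)$ is the number of edges on the path between $a$ and $b$. $k$-lazy finger bound: fix a BST $T$ on $[n]$. A finger strategy consists of initial positions $\vec\ell\in[n]^k$ and a sequence $\vec f\in[k]^m$, where finger $f_t$ serves request $s_t$ and then sits at $s_t$; the other fingers stay where they are. With $\sigma(i,t)$ the position of finger $i$ just before time $t$ (and $\sigma(i,1)=\ell_i$), the cost is $\sum_{t=1}^m(1+d_T(s_t,\sigma(f_t,t)))$. Then ${\mathit LF}^k_T(S)$ is the minimum over strategies, and ${\mathit LF}^k(S)=\min_T{\mathit LF}^k_T(S)$ over BSTs $T$ on $[n]$. *)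

From mathcomp Require Import all_boot.
From mathcomp Require Import boolp.
Set Implicit Arguments. Unset Strict Implicit. Unset Printing Implicit Defensive.

(** A pattern pi of length k is a sequence of naturals
    (a permutation of 1..k). *)
Definition contains (X pi : seq nat) : Prop :=
  exists idx : seq nat,
    [/\ size idx = size pi, sorted ltn idx, all (fun i => i < size X) idx &
      forall a b, a < size pi -> b < size pi ->
        (nth 0 X (nth 0 idx a) < nth 0 X (nth 0 idx b)) = (nth 0 pi a < nth 0 pi b)].

Definition avoids (X pi : seq nat) : Prop := ~ contains X pi.

Definition k_monotone (k : nat) (X : seq nat) : Prop :=
  avoids X (iota 1 k) \/ avoids X (rev (iota 1 k)).

Inductive tree := Leaf | Node of tree & nat & tree.

Fixpoint inorder (t : tree) : seq nat :=
  match t with Leaf => [::] | Node l x r => inorder l ++ x :: inorder r end.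

(** A BST on [n]: a binary tree whose in-order traversal is 1,2,...,n
    (so its keys are exactly [n], each once, in search-tree order). *)
Definition is_BST (n : nat) (t : tree) : Prop := inorder t = iota 1 n.

Fixpoint root_path (t : tree) (a : nat) : seq nat :=
  match t with
  | Leaf => [::]
  | Node l x r =>
      if x == a then [:: x]
      else if a \in inorder l then x :: root_path l a
      else x :: root_path r a
  end.

Fixpoint common_prefix (s1 s2 : seq nat) : nat :=
  match s1, s2 with
  | x :: s1', y :: s2' => if x == y then (common_prefix s1' s2').+1 else 0
  | _, _ => 0
  end.

(** d_T(a,b): number of edges on the tree path between a and b
    = depth a + depth b - 2 depth(lca a b). *)
Definition dist (t : tree) (a b : nat) : nat :=
  let pa := root_path t a in let pb := root_path t b in
  size pa + size pb - 2 * common_prefix pa pb.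

(** Cost of a finger strategy.  pos = current finger positions (finger i is
    at nth 0 pos i, fingers indexed 0..k-1), f = sequence of fingers used,
    S = request sequence. *)
Fixpoint finger_cost (t : tree) (pos f S : seq nat) : nat :=
  match f, S with
  | ft :: f', st :: S' =>
      1 + dist t st (nth 0 pos ft) + finger_cost t (set_nth 0 pos ft st) f' S'
  | _, _ => 0
  end.

(** A valid k-finger strategy for S over keys [n]:
    initial positions ell in [n]^k and finger sequence f in [k]^m, m = |S|
    (fingers [k] are encoded as 0..k-1). *)
Definition strategy (n k : nat) (S ell f : seq nat) : Prop :=
  [/\ size ell = k, all (fun x => 0 < x <= n) ell,
      size f = size S & all (fun i => i < k) f].

(** LF^k_T(S) = min over strategies of the cost (0 if no strategy exists,
    which only happens in degenerate cases such as k = 0). *)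
Definition LF_T_pred (n k : nat) (t : tree) (S : seq nat) : pred nat :=
  fun B => `[< exists ell f, strategy n k S ell f /\ finger_cost t ell f S = B >].

Definition LF_T (n k : nat) (t : tree) (S : seq nat) : nat :=
  match pselect (exists B, LF_T_pred n k t S B) with
  | left h => ex_minn h
  | right _ => 0
  end.

Definition LF_pred (n k : nat) (S : seq nat) : pred nat :=
  fun B => `[< exists t, is_BST n t /\ LF_T n k t S = B >].

Definition LF (n k : nat) (S : seq nat) : nat :=
  match pselect (exists B, LF_pred n k S B) with
  | left h => ex_minn h
  | right _ => 0
  end.

Definition seq_in_n_n (n : nat) (S : seq nat) : Prop :=
  size S = n /\ all (fun x => 0 < x <= n) S.

From mathcomp Require Import all_boot.
From mathcomp Require Import boolp zify.
Set Implicit Arguments. Unset Strict Implicit. Unset Printing Implicit Defensive.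

(* Take T to be the path 1 - 2 - ... - n, so that d_T(a, b) = |a - b|, and
   serve the requests greedily in the manner of patience sorting.  Say S
   avoids (1, ..., k); all fingers start at n.  A request x is served by the
   first finger sitting at a key >= x.  Then finger j always sits either at n
   or at the last element of an increasing subsequence of length j + 1 of the
   requests served so far, so the last finger never moves and some finger is
   always available.  A finger only ever moves down, so the total distance
   travelled is at most k n; with the unit cost per request this gives
   LF^k(S) <= n + k n <= 2 n k.  The case avoiding (k, ..., 1) is symmetric. *)

Fixpoint line (m c : nat) : tree :=
  match c with 0 => Leaf | c'.+1 => Node Leaf m (line m.+1 c') end.

Lemma inorder_line m c : inorder (line m c) = iota m c.
Proof. by elim: c m => [|c IH] m //=; rewrite IH. Qed.

Lemma root_path_line m c a :
  m <= a < m + c -> root_path (line m c) a = iota m (a - m).+1.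
Proof.
elim: c m => [|c IH] m /=; first by lia.
move=> a_in; case: eqP => [<-|a_neq]; first by rewrite subnn.
by rewrite IH; [have -> : a - m = (a - m.+1).+1 by lia | lia].
Qed.

Lemma common_prefix_iota m p q :
  common_prefix (iota m p) (iota m q) = minn p q.
Proof. by elim: p q m => [|p IH] [|q] m //=; rewrite eqxx IH; lia. Qed.

Lemma dist_line m c a b : m <= a < m + c -> m <= b < m + c ->
  dist (line m c) a b = (a - b) + (b - a).
Proof.
move=> a_in b_in; rewrite /dist !root_path_line //.
by rewrite common_prefix_iota !size_iota; lia.
Qed.

Lemma LF_T_le_cost n k t S ell f :
  strategy n k S ell f -> LF_T n k t S <= finger_cost t ell f S.
Proof.
move=> strat; rewrite /LF_T; case: pselect => [ex|nex].
  by case: ex_minnP => m _; apply; apply/asboolP; exists ell, f.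
by exfalso; apply: nex; exists (finger_cost t ell f S); apply/asboolP; exists ell, f.
Qed.

Lemma LF_le_LF_T n k t S : is_BST n t -> LF n k S <= LF_T n k t S.
Proof.
move=> bst; rewrite /LF; case: pselect => [ex|nex].
  by case: ex_minnP => m _; apply; apply/asboolP; exists t.
by exfalso; apply: nex; exists (LF_T n k t S); apply/asboolP; exists t.
Qed.

Lemma path_ltn0_map_succn (idx : seq nat) :
  sorted ltn idx -> path ltn 0 (map succn idx).
Proof. by case: idx => //= i idx srt; apply: homo_path srt. Qed.

Lemma subseq_indices (T : eqType) (x0 : T) (s X : seq T) : subseq s X ->
  exists idx : seq nat,
    [/\ size idx = size s, sorted ltn idx, all (fun i => i < size X) idx &
        forall a, a < size s -> nth x0 X (nth 0 idx a) = nth x0 s a].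
Proof.
elim: X s => [|x X IH] [|y s] //= sub; try by exists [::].
have shift idx : sorted ltn idx -> all (fun i => i < size X) idx ->
    sorted ltn (0 :: map succn idx) /\ all (fun i => i < (size X).+1) (map succn idx).
  by move=> srt lt; split; [exact: path_ltn0_map_succn | rewrite all_map].
case: eqP sub => [<-|_] sub.
- have [idx [idx_size idx_sorted idx_lt idx_nth]] := IH _ sub.
  have [shift_sorted shift_lt] := shift _ idx_sorted idx_lt.
  exists (0 :: map succn idx); split => //=.
  + by rewrite size_map idx_size.
  + by case=> [|a] //= a_lt; rewrite (nth_map 0) ?idx_size //= idx_nth.
- have [idx [idx_size idx_sorted idx_lt idx_nth]] := IH _ sub.
  have [shift_sorted shift_lt] := shift _ idx_sorted idx_lt.
  exists (map succn idx); split => //.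
  + by rewrite size_map idx_size.
  + exact: path_sorted shift_sorted.
  + by move=> a a_lt; rewrite (nth_map 0) ?idx_size //= idx_nth.
Qed.

Lemma subseq_contains (X s pi : seq nat) : subseq s X -> size s = size pi ->
  (forall a b, a < size pi -> b < size pi ->
     (nth 0 s a < nth 0 s b) = (nth 0 pi a < nth 0 pi b)) ->
  contains X pi.
Proof.
move=> sub size_s order_iso.
have [idx [idx_size idx_sorted idx_lt idx_nth]] := subseq_indices 0 sub.
exists idx; split => //; first by rewrite idx_size.
by move=> a b a_lt b_lt; rewrite !idx_nth ?size_s // order_iso.
Qed.

Lemma sorted_nth_rel (T : Type) (x0 : T) (r : rel T) (s : seq T) a b :
  transitive r -> irreflexive r -> sorted r s -> a < size s -> b < size s ->
  r (nth x0 s a) (nth x0 s b) = (a < b).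
Proof.
move=> r_trans r_irr srt a_lt b_lt.
have mono := sorted_ltn_nth r_trans x0 srt.
case: ltngtP => [ab|ba|<-]; last exact: r_irr.
- exact: mono.
- apply/negbTE/negP => r_ab.
  by have := r_trans _ _ _ r_ab (mono _ _ b_lt a_lt ba); rewrite r_irr.
Qed.

Definition has_chain (r : rel nat) (X : seq nat) (len : nat) : Prop :=
  exists s, [/\ subseq s X, sorted r s & size s = len].

Lemma has_chain_subseq r X Y len :
  subseq X Y -> has_chain r X len -> has_chain r Y len.
Proof. by move=> XY [s [sX srt sz]]; exists s; split=> //; apply: subseq_trans XY. Qed.

Lemma increasing_chain_contains X k :
  has_chain ltn X k -> contains X (iota 1 k).
Proof.
move=> [s [sub srt <-]]; apply: (subseq_contains sub); rewrite ?size_iota //.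
move=> a b a_lt b_lt; rewrite !nth_iota //.
by rewrite (sorted_nth_rel 0 ltn_trans ltnn).
Qed.

Lemma decreasing_chain_contains X k :
  has_chain (fun a b => b < a) X k -> contains X (rev (iota 1 k)).
Proof.
move=> [s [sub srt <-]]; apply: (subseq_contains sub); rewrite ?size_rev ?size_iota //.
move=> a b a_lt b_lt; rewrite !nth_rev ?size_iota // !nth_iota; try lia.
have gt_trans : transitive (fun x y : nat => y < x).
  by move=> y x w /= yx wy; apply: ltn_trans yx.
have gt_irr : irreflexive (fun x y : nat => y < x) by move=> x /=; rewrite ltnn.
have /= -> := sorted_nth_rel 0 gt_trans gt_irr srt b_lt a_lt.
by move: a_lt b_lt; set m := size s => ? ?; apply/idP/idP; lia.
Qed.

Lemma all_set_nth (a : pred nat) s i y :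
  all a s -> a y -> i < size s -> all a (set_nth 0 s i y).
Proof.
elim: s i => [|x s IH] [|i] //= /andP[ax as_] ay i_lt; first by rewrite ay as_.
by rewrite ax IH.
Qed.

Lemma sumn_map_set_nth (g : nat -> nat) s i y : i < size s ->
  sumn (map g (set_nth 0 s i y)) + g (nth 0 s i) = sumn (map g s) + g y.
Proof.
elim: s i => [|x s IH] [|i] //= i_lt; first by lia.
by have := IH i i_lt; lia.
Qed.

Lemma sumn_map_le (g : nat -> nat) (B : nat) s :
  all (fun x => g x <= B) s -> sumn (map g s) <= size s * B.
Proof. by elim: s => //= x s IH /andP[gx /IH]; lia. Qed.

Section GreedyFingers.

Variables (t : tree) (dom : pred nat) (r : rel nat) (z : nat).
Variables (pot : nat -> nat) (B : nat).
Hypothesis r_z : forall x, dom x -> ~~ r z x.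
Hypothesis pot_step : forall p x, dom p -> dom x -> ~~ r p x ->
  dist t x p + pot p <= pot x.
Hypothesis pot_le : forall x, dom x -> pot x <= B.

Definition chain_end (P : seq nat) (v len : nat) : Prop :=
  exists s, [/\ subseq s P, sorted r s, size s = len & last 0 s = v].

Definition fingers_ok (P pos : seq nat) : Prop :=
  forall j, j < size pos -> nth 0 pos j = z \/ chain_end P (nth 0 pos j) j.+1.

Lemma fingers_ok_rcons P pos x : fingers_ok P pos -> fingers_ok (rcons P x) pos.
Proof.
move=> ok j j_lt; case: (ok j j_lt) => [->|[s [sub srt sz lst]]]; first by left.
by right; exists s; split=> //; apply: subseq_trans sub (subseq_rcons P x).
Qed.

Lemma has_free_finger P pos x : fingers_ok P pos -> dom x ->
  ~ has_chain r P (size pos) -> has (fun p => ~~ r p x) pos.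
Proof.
move=> ok dx no_chain; case: (posnP (size pos)) => [pos0|pos_gt0].
  by case: no_chain; exists [::]; rewrite sub0seq pos0.
have last_lt : (size pos).-1 < size pos by rewrite prednK.
apply/hasP; exists (nth 0 pos (size pos).-1); first exact: mem_nth.
case: (ok _ last_lt) => [->|[s [sub srt sz _]]]; first exact: r_z.
by case: no_chain; exists s; rewrite prednK in sz.
Qed.

Lemma fingers_ok_step P pos x (i := find (fun p => ~~ r p x) pos) :
  fingers_ok P pos -> dom x -> i < size pos ->
  fingers_ok (rcons P x) (set_nth 0 pos i x).
Proof.
move=> ok dx i_lt j; rewrite size_set_nth (maxn_idPr i_lt) nth_set_nth /=.
case: eqP => [-> _|_]; last exact: fingers_ok_rcons.
right; case i_eq: i => [|i'].
  by exists [:: x]; rewrite sub1seq mem_rcons mem_head.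
have r_prev : r (nth 0 pos i') x.
  have i'_lt : i' < find (fun p => ~~ r p x) pos by rewrite -/i i_eq.
  exact/negbFE/(before_find 0 i'_lt).
have i'_size : i' < size pos by rewrite -i_eq ltnW.
case: (ok i' i'_size) => [pz|[s [sub srt sz lst]]].
  by move: r_prev; rewrite pz (negbTE (r_z dx)).
exists (rcons s x); split.
- by rewrite -!cats1; apply: cat_subseq.
- by case: s sub srt sz lst => //= y s _ srt _ lst; rewrite rcons_path srt lst.
- by rewrite size_rcons sz.
- by rewrite last_rcons.
Qed.

Lemma greedy_cost S : forall P pos,
  fingers_ok P pos -> all dom pos -> all dom S ->
  ~ has_chain r (P ++ S) (size pos) ->
  exists f, [/\ size f = size S, all (fun i => i < size pos) f &
    finger_cost t pos f S + sumn (map pot pos) <= size S + size pos * B].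
Proof.
elim: S => [|x S IH] P pos ok dom_pos dom_S no_chain.
  exists [::]; split=> //=; apply: sumn_map_le.
  by apply: sub_all dom_pos => y /pot_le.
move: dom_S => /= /andP[dx dom_S].
have no_chain_P : ~ has_chain r P (size pos).
  by move/(has_chain_subseq (prefix_subseq P (x :: S))).
set i := find (fun p => ~~ r p x) pos.
have i_lt : i < size pos by rewrite -has_find (has_free_finger ok dx no_chain_P).
set p := nth 0 pos i.
have free_p : ~~ r p x := nth_find 0 (has_free_finger ok dx no_chain_P).
have dp : dom p by apply: (all_nthP 0 dom_pos).
have size_pos' : size (set_nth 0 pos i x) = size pos.
  by rewrite size_set_nth (maxn_idPr i_lt).
have ok' := fingers_ok_step ok dx i_lt.
have dom_pos' : all dom (set_nth 0 pos i x) by exact: all_set_nth.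
have no_chain' : ~ has_chain r (rcons P x ++ S) (size (set_nth 0 pos i x)).
  by rewrite size_pos' cat_rcons.
have [f [f_size f_lt f_cost]] := IH _ _ ok' dom_pos' dom_S no_chain'.
rewrite size_pos' in f_lt f_cost.
exists (i :: f); rewrite /= f_size i_lt; split=> //.
have := sumn_map_set_nth pot x i_lt; have := pot_step dp dx free_p.
by move: f_cost; rewrite -/i -/p; lia.
Qed.

End GreedyFingers.

Lemma LF_le_without_chain n k S (r : rel nat) z (pot : nat -> nat) :
  0 < k -> seq_in_n_n n S -> 0 < z <= n ->
  (forall x, 0 < x <= n -> ~~ r z x) ->
  (forall p x, 0 < p <= n -> 0 < x <= n -> ~~ r p x ->
     (x - p) + (p - x) + pot p <= pot x) ->
  (forall x, 0 < x <= n -> pot x <= n) ->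
  ~ has_chain r S k -> LF n k S <= 2 * n * k.
Proof.
move=> k_gt0 [S_size S_in] z_in r_z pot_step pot_le no_chain.
have line_step p x : 0 < p <= n -> 0 < x <= n -> ~~ r p x ->
    dist (line 1 n) x p + pot p <= pot x.
  by move=> p_in x_in rpx; rewrite dist_line; [exact: pot_step | lia | lia].
have fingers0 : fingers_ok r z [::] (nseq k z).
  by move=> j; rewrite size_nseq => j_lt; left; rewrite nth_nseq j_lt.
have dom0 : all (fun x => 0 < x <= n) (nseq k z) by rewrite all_nseq z_in orbT.
have no_chain0 : ~ has_chain r ([::] ++ S) (size (nseq k z)) by rewrite size_nseq.
have [f [f_size f_lt f_cost]] :=
  greedy_cost r_z line_step pot_le fingers0 dom0 S_in no_chain0.
rewrite size_nseq S_size in f_lt f_cost.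
have strat : strategy n k S (nseq k z) f by split; rewrite ?size_nseq.
apply: leq_trans (LF_le_LF_T k S (inorder_line 1 n)) _.
apply: leq_trans (LF_T_le_cost (line 1 n) strat) _.
by move: f_cost; nia.
Qed.

Theorem mainTheorem5 :
  exists c : nat, 0 < c /\
    forall n k : nat, 1 <= n -> 1 <= k ->
    forall S : seq nat, seq_in_n_n n S -> k_monotone k S ->
      LF n k S <= c * n * k.
Proof.
exists 2; split=> // n k n_gt0 k_gt0 S S_in [no_inc|no_dec].
- apply: (LF_le_without_chain (r := ltn) (z := n) (pot := fun p => n - p)) => //.
  + by rewrite n_gt0 /=.
  + by move=> x /andP[_]; rewrite -leqNgt.
  + by move=> p x /andP[_ p_le] _; rewrite -leqNgt; lia.
  + by move=> x _; apply: leq_subr.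
  + by move/increasing_chain_contains.
- apply: (LF_le_without_chain (r := fun a b => b < a) (z := 1) (pot := fun p => p.-1)) => //.
  + by move=> x /andP[x_gt0 _]; rewrite -leqNgt.
  + by move=> p x /andP[p_gt0 _] /andP[x_gt0 _]; rewrite -leqNgt; lia.
  + by move=> x /andP[_ x_le]; lia.
  + by move/decreasing_chain_contains.
Qed.
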